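(* Let $\mathcal{D}$ be a symmetric $2$-$(56,11,2)$ design (biplane) with point set $\{1,\dots,56\}$ and let $B=\{46,\dots,56\}$ be a block of $\mathcal{D}$. Let $A$ be the $56\times 56$ points-by-blocks incidence matrix of $\mathcal{D}$ with columns ordered so that the last column corresponds to $B$, so that $$A=\begin{pmatrix} A'' & \bar 0_{45}\\ A' & \bar 1_{11}\end{pmatrix},$$ where $A''$ is the $45\times 55$ incidence matrix of the residual design $\mathcal{D}_B$ (a $2$-$(45,9,2)$ design on points $1,\dots,45$) and $A'$ is the $11\times 55$ incidence matrix of the derived design $\mathcal{D}^B$. Let $L''$ and $L$ be the linear codes over $GF(3)$ spanned by the rows of $A''$ and of $A$ respectively. If $c=(c_1,\dots,c_{55})\in\{0,1\}^{55}$ has Hamming weight $12$ and lies in $(L'')^\perp$, then $c^*=(c_1,\dots,c_{55},0)$ lies in $L^\perp$.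
   Context: A symmetric $2$-$(v,k,\lambda)$ design has $v$ points and $v$ blocks of size $k$, every pair of points in exactly $\lambda$ blocks; a biplane is one with $\lambda=2$. For a block $B$ of a design $(X,\mathcal{B})$, the residual design $\mathcal{D}_B$ has point set $X\setminus B$ and blocks $B_j\setminus B$ for $B_j\in\mathcal{B}$, $B_j\neq B$; the derived design $\mathcal{D}^B$ has point set $B$ and blocks $B\cap B_j$ for $B_j\neq B$. Duals of codes are taken with respect to the standard inner product over $GF(3)$. *)

From HB Require Import structures.
From mathcomp Require Import all_boot all_order all_algebra.
Set Implicit Arguments. Unset Strict Implicit. Unset Printing Implicit Defensive.
Import GRing.Theory.
Local Open Scope ring_scope.

(* An incidence structure on points 'I_v and blocks 'I_v is given by
   inc : 'I_v -> 'I_v -> bool, inc p b = (point p lies in block b). *)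

Definition symmetric_design (v k lam : nat) (inc : 'I_v -> 'I_v -> bool) : Prop :=
  (forall b : 'I_v, #|[set p : 'I_v | inc p b]| = k) /\
  (forall p q : 'I_v, p != q -> #|[set b : 'I_v | inc p b && inc q b]| = lam).

Definition incmx (v : nat) (inc : 'I_v -> 'I_v -> bool) : 'M['F_3]_v :=
  \matrix_(i, j) (inc i j)%:R.

Definition in_dual_code (m n : nat) (G : 'M['F_3]_(m, n)) (x : 'rV['F_3]_n) : Prop :=
  forall u : 'rV['F_3]_n, (u <= G)%MS -> u *m x^T = 0.

Definition hweight (n : nat) (x : 'rV['F_3]_n) : nat := #|[set j : 'I_n | x 0 j != 0]|.

From HB Require Import structures.
From mathcomp Require Import all_boot all_order all_algebra.
From mathcomp Require Import ring zify.
Set Implicit Arguments.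
Unset Strict Implicit.
Unset Printing Implicit Defensive.
Import GRing.Theory Num.Theory.
Local Open Scope ring_scope.

(** Over GF(3) the Gram matrix [A^T A] of the biplane is [9 I + 2 J = 2 J],
    since any two blocks of a symmetric design meet in [lambda] points; as
    [c*] has weight [12 = 0], [A^T (A c*^T) = 2 J c*^T = 0].  The vector
    [y = A c*^T] vanishes off [B] because [c] is orthogonal to [L''].  A block
    [e <> B] meets [B] in exactly two points [q, q'], so [y_q + y_q' = 0]; every
    pair of points of [B] lies in such a block and [|B| >= 3], hence [y = 0]. *)

Lemma card_set_sum (T : finType) (P : pred T) : #|[set x | P x]| = (\sum_x P x)%N.
Proof.
by rewrite -sum1dep_card big_mkcond; apply: eq_bigr => x _; case: (P x).
Qed.

Lemma sumr_nat_bool (R : pzSemiRingType) (T : finType) (P : pred T) :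
  \sum_x ((P x)%:R : R) = #|[set x | P x]|%:R.
Proof. by rewrite card_set_sum natr_sum. Qed.

Lemma pairwise_opp_eq0 (F : idomainType) (T : finType) (S : {set T}) (s : T -> F) :
  2%:R != 0 :> F -> (2 < #|S|)%N ->
  {in S &, forall q q', q != q' -> s q + s q' = 0} -> {in S, forall q, s q = 0}.
Proof.
move=> two_neq0 S_gt2 opp q qS.
have : (1 < #|S :\ q|)%N by move: S_gt2; rewrite (cardsD1 q) qS.
case/card_gt1P => a [b] []; rewrite !inE => /andP [aq aS] /andP [bq bS] ab.
have : s q *+ 2 = (s q + s a) + (s q + s b) - (s a + s b) by ring.
rewrite !opp // 1?eq_sym // subr0 addr0 -mulr_natr => /eqP.
by rewrite mulf_eq0 (negbTE two_neq0) orbF => /eqP.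
Qed.

Lemma mul_tr_row_mx0 (R : pzRingType) m n1 n2 (A : 'M[R]_(m, n1 + n2)) (x : 'rV_n1) :
  A *m (row_mx x (0 : 'rV_n2))^T = lsubmx A *m x^T.
Proof. by rewrite -[A in LHS]hsubmxK tr_row_mx trmx0 mul_row_col mulmx0 addr0. Qed.

Definition incidence_mx {R : pzSemiRingType} {v : nat} (inc : 'I_v -> 'I_v -> bool) :
  'M[R]_v := \matrix_(i, j) (inc i j)%:R.

Section IncidenceMatrix.
Variables (R : pzSemiRingType) (v : nat) (inc : 'I_v -> 'I_v -> bool).
Local Notation N := (incidence_mx inc : 'M[R]_v).

Lemma incidence_mx_mul_trE p q :
  (N *m N^T) p q = #|[set b | inc p b && inc q b]|%:R.
Proof.
rewrite mxE -sumr_nat_bool; apply: eq_bigr => b _.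
by rewrite !mxE -natrM mulnb.
Qed.

Lemma incidence_mx_tr_mulE e f :
  (N^T *m N) e f = #|[set p | inc p e && inc p f]|%:R.
Proof.
rewrite mxE -sumr_nat_bool; apply: eq_bigr => p _.
by rewrite !mxE -natrM mulnb.
Qed.

End IncidenceMatrix.

Section SymmetricDesign.
Variables (v k lam : nat) (inc : 'I_v -> 'I_v -> bool).
Hypothesis design : symmetric_design k lam inc.

Let r p := #|[set b | inc p b]|.

Lemma card_blocks_through_mul p : (r p * k = r p + lam * v.-1)%N.
Proof.
have [card_block card_pair] := design.
transitivity (\sum_q #|[set b | inc p b && inc q b]|)%N.
  rewrite /r card_set_sum big_distrl /=.
  under [RHS]eq_bigr do rewrite card_set_sum.
  rewrite exchange_big /=.
  apply: eq_bigr => b _; rewrite -(card_block b) card_set_sum big_distrr /=.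
  by apply: eq_bigr => q _; rewrite mulnb.
rewrite (bigD1 p) //=; congr (_ + _)%N.
  by apply: eq_card => b; rewrite !inE andbb.
under eq_bigr => q qp do rewrite card_pair 1?eq_sym //.
by rewrite sum_nat_const cardC1 card_ord mulnC.
Qed.

Hypothesis k_gt1 : (1 < k)%N.

Lemma card_blocks_through p : #|[set b | inc p b]| = k.
Proof.
have eq_r q : r q = r p.
  have := card_blocks_through_mul q; have := card_blocks_through_mul p; nia.
have sum_r : (\sum_q r q = v * k)%N.
  rewrite /r; under eq_bigr do rewrite card_set_sum.
  rewrite exchange_big /=; under eq_bigr => b _ do rewrite -card_set_sum design.1.
  by rewrite sum_nat_const card_ord.
have v_gt0 : (0 < v)%N := leq_ltn_trans (leq0n p) (ltn_ord p).
apply/eqP; rewrite -(eqn_pmul2l v_gt0) -sum_r.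
by under eq_bigr do rewrite eq_r; rewrite sum_nat_const card_ord.
Qed.

Lemma const_mx_mul_incidence_mx (R : pzSemiRingType) :
  (const_mx 1 : 'M[R]_v) *m incidence_mx inc = k%:R *: const_mx 1.
Proof.
apply/matrixP => i j; rewrite !mxE.
under eq_bigr do rewrite !mxE mul1r.
by rewrite sumr_nat_bool design.1 mulr1.
Qed.

Lemma incidence_mx_tr_mul_const (R : pzSemiRingType) :
  (incidence_mx inc : 'M[R]_v)^T *m const_mx 1 = k%:R *: (const_mx 1 : 'M_v).
Proof.
apply/matrixP => i j; rewrite !mxE.
under eq_bigr do rewrite !mxE mulr1.
by rewrite sumr_nat_bool design.1 mulr1.
Qed.

Lemma incidence_mx_mul_tr (R : pzSemiRingType) :
  (lam <= k)%N -> (incidence_mx inc : 'M[R]_v) *m (incidence_mx inc)^T =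
    (k - lam)%:R%:M + lam%:R *: const_mx 1.
Proof.
move=> lam_le_k; apply/matrixP => p q; rewrite incidence_mx_mul_trE !mxE mulr1.
case: eqVneq => [<-|pq]; last by rewrite design.2 // mulr0n add0r.
rewrite mulr1n -natrD subnK //; congr (_%:R).
by rewrite -(card_blocks_through p); apply: eq_card => b; rewrite !inE andbb.
Qed.

Hypothesis lam_lt_k : (lam < k)%N.

Lemma incidence_mx_tr_mul (F : numFieldType) :
  (incidence_mx inc : 'M[F]_v)^T *m incidence_mx inc =
    (k - lam)%:R%:M + lam%:R *: const_mx 1.
Proof.
apply/matrixP => e f.
set N := incidence_mx inc : 'M[F]_v; set J := const_mx 1 : 'M[F]_v.
have param : (k - lam + lam * v = k * k)%N.
  have := card_blocks_through_mul e; rewrite /r card_blocks_through //.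
  have := ltn_ord e; nia.
have a_neq0 : (k - lam)%:R != 0 :> F by rewrite pnatr_eq0 subn_eq0 -ltnNge.
have k_neq0 : k%:R != 0 :> F by rewrite pnatr_eq0 -lt0n ltnW.
(* [Mi] inverts [N N^T = (k - lam) I + lam J], because [k - lam + lam v = k^2]. *)
pose Mi := (k - lam)%:R^-1 *: (1%:M - (lam%:R / k%:R ^+ 2) *: J).
have JJ : J *m J = v%:R *: J.
  apply/matrixP => i j; rewrite !mxE.
  under eq_bigr do rewrite !mxE mulr1.
  by rewrite sumr_const card_ord mulr1.
have NNtMi : (N *m N^T) *m Mi = 1%:M.
  rewrite (incidence_mx_mul_tr _ (ltnW lam_lt_k)) /Mi -scalemxAr mulmxBr -scalemxAr mulmx1.
  rewrite -/J mulmxDl mul_scalar_mx -scalemxAl JJ.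
  apply/matrixP => i j; rewrite !mxE.
  have := congr1 (GRing.natmul (1 : F)) param; rewrite natrD natrM => param'.
  by case: eqP => _ /=; rewrite ?mulr1n ?mulr0n !mulr1 param'; field; rewrite k_neq0 a_neq0.
have : (N^T *m Mi) *m N = 1%:M by apply: mulmx1C; rewrite mulmxA NNtMi.
rewrite /Mi -scalemxAr mulmxBr mulmx1 -scalemxAr -scalemxAl mulmxBl -scalemxAl.
rewrite incidence_mx_tr_mul_const -scalemxAl const_mx_mul_incidence_mx -/J.
set X := N^T *m N; clearbody X => /(congr1 (fun M : 'M_v => M e f)).
rewrite !mxE !mulr1 -expr2 divfK ?expf_neq0 // => XE.
rewrite -[X e f](subrK lam%:R) -[X e f - _](mulVKf a_neq0) XE.
by case: eqP => _; rewrite ?mulr1n ?mulr0n ?mulr1 ?mulr0.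
Qed.

Lemma card_blocks_meet e f :
  e != f -> #|[set p | inc p e && inc p f]| = lam.
Proof.
move=> ef; apply/eqP; rewrite -(eqr_nat rat).
have := congr1 (fun M : 'M_v => M e f) (incidence_mx_tr_mul rat).
by rewrite incidence_mx_tr_mulE !mxE (negbTE ef) mulr0n add0r mulr1 => ->.
Qed.

End SymmetricDesign.

Lemma in_dual_codeP m n (G : 'M['F_3]_(m, n)) (x : 'rV_n) :
  in_dual_code G x <-> G *m x^T = 0.
Proof.
split=> [Gx | Gx0 u /submxP [w ->]]; last by rewrite -mulmxA Gx0 mulmx0.
apply/row_matrixP => i; rewrite row_mul row0; exact/Gx/row_sub.
Qed.

Lemma sum_hweight n (x : 'rV['F_3]_n) :
  (forall j, x 0 j = 0 \/ x 0 j = 1) -> \sum_j x 0 j = (hweight x)%:R.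
Proof.
move=> x01; rewrite /hweight -sumr_nat_bool.
by apply: eq_bigr => j _; case: (x01 j) => ->.
Qed.

Lemma tr_incmx_mul_const v k lam (inc : 'I_v -> 'I_v -> bool) :
  symmetric_design k lam inc -> (1 < k)%N -> (lam < k)%N -> k = lam %[mod 3] ->
  (incmx inc)^T *m incmx inc = const_mx lam%:R.
Proof.
move=> design k_gt1 lam_lt_k k_eq_lam.
apply/matrixP => e f; rewrite incidence_mx_tr_mulE mxE.
case: (eqVneq e f) => [<-|ef]; last by rewrite (card_blocks_meet design).
rewrite -[lam%:R](Fp_nat_mod (isT : prime 3)) -k_eq_lam Fp_nat_mod // -(design.1 e).
by congr _%:R; apply: eq_card => p; rewrite !inE andbb.
Qed.

Section Biplane.
Variables (v k : nat) (inc : 'I_v -> 'I_v -> bool) (B : 'I_v).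
Hypotheses (design : symmetric_design k 2 inc) (k_gt2 : (2 < k)%N).

Lemma biplane_block_pair q q' :
  inc q B -> inc q' B -> q != q' ->
  exists2 e, e != B & [set p | inc p e && inc p B] = [set q; q'].
Proof.
move=> qB q'B qq'.
have : (0 < #|[set b | inc q b && inc q' b] :\ B|)%N.
  by move: (design.2 q q' qq'); rewrite (cardsD1 B) !inE qB q'B add1n => -[->].
case/card_gt0P => e; rewrite !inE => /and3P [eB qe q'e].
exists e => //; apply/esym/eqP; rewrite eqEcard.
rewrite (card_blocks_meet design (ltnW k_gt2) k_gt2 eB) cards2 qq' andbT.
by apply/subsetP => p; rewrite !inE => /orP [] /eqP ->; rewrite ?qe ?q'e.
Qed.

Lemma incmx_tr_mul_supported_eq0 (y : 'cV['F_3]_v) :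
  (forall p, ~~ inc p B -> y p 0 = 0) -> (incmx inc)^T *m y = 0 -> y = 0.
Proof.
move=> y_supp Ay0.
have block_sum e : \sum_(p in [set p | inc p e && inc p B]) y p 0 = 0.
  transitivity (((incmx inc)^T *m y) e 0); last by rewrite Ay0 mxE.
  rewrite mxE big_mkcond.
  apply: eq_bigr => p _; rewrite !mxE inE.
  case: (inc p e); rewrite /= ?mul0r // mulr1n mul1r.
  by case: (boolP (inc p B)) => // /y_supp ->.
apply/matrixP => p j; rewrite (ord1 j) mxE.
have [pB|] := boolP (inc p B); last exact: y_supp.
apply: (@pairwise_opp_eq0 _ _ [set p | inc p B] (fun p => y p 0)); rewrite ?inE //.
  by rewrite (design.1 B).
move=> q q'; rewrite !inE => qB q'B qq'.
have [e _ meetB] := biplane_block_pair qB q'B qq'.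
by rewrite -(block_sum e) meetB big_setU1 ?big_set1 ?inE.
Qed.

End Biplane.

Theorem lemma2 (inc : 'I_56 -> 'I_56 -> bool)
  (hD : symmetric_design 11 2 inc)
  (hB : forall p : 'I_56, inc p ord_max = (45 <= (p : nat))%N)
  (c : 'rV['F_3]_55)
  (h01 : forall j, c 0 j = 0 \/ c 0 j = 1)
  (hw : hweight c = 12%N)
  (hc : in_dual_code
          (\matrix_(i < 45, j < 55)
             incmx inc (widen_ord (isT : (45 <= 56)%N) i)
                       (widen_ord (isT : (55 <= 56)%N) j)) c) :
  in_dual_code (incmx inc) (row_mx c (0 : 'rV['F_3]_1)).
Proof.
apply/in_dual_codeP; rewrite (@mul_tr_row_mx0 _ 56 55 1).
apply: (incmx_tr_mul_supported_eq0 hD _ (B := ord_max)) => //.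
  move=> p; rewrite hB -ltnNge => p_lt45.
  move/in_dual_codeP/matrixP/(_ (Ordinal p_lt45) 0): hc; rewrite [RHS]mxE => <-.
  rewrite !mxE; apply: eq_bigr => j _; rewrite !mxE.
  by congr ((inc _ _)%:R * _); apply: val_inj.
rewrite mulmxA mulmx_lsub (tr_incmx_mul_const hD) //.
apply/matrixP => i j; rewrite !mxE.
under eq_bigr do rewrite !mxE.
rewrite (ord1 j) -mulr_sumr sum_hweight // hw -natrM.
by rewrite -(Fp_nat_mod (isT : prime 3)).
Qed.
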